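(* Let $K\ge 4$ and let $X$ be $\mathbb{R}^2$ with a norm $\|\cdot\|_X$ whose closed unit ball $BX$ is a symmetric convex polygon with $2K$ sides, written as $BX=\bigcap_{k=1}^K\{x:|x\cdot b_k|\le 1\}$ for vectors $b_1,\dots,b_K\in\mathbb{R}^2$. Then there are constants $C,c>0$ and arbitrarily large integers $n$ for which there exist sets $A=A(n)\subset B(0,1/2)$ with $|A|=n$ such that $$|(A-A)\cdot b_k|\le C n^{1-1/K},\quad k=1,\dots,K$$ (in particular $|\Delta_X(A)|\le C' n^{1-1/K}$ for a constant $C'$ independent of $n$), and $$\|x-x'\|_X\ge c\, n^{-1/2}\quad\text{for all } x,x'\in A,\ x\ne x'.$$
   Context: $B(x,r)$ is the closed Euclidean ball of center $x$ and radius $r$; $|A|$ is the cardinality of a finite set; $A-A=\{a-a':a,a'\in A\}$, $A\cdot v=\{a\cdot v: a\in A\}$; $\Delta_X(A)=\{\|x-x'\|_X:x,x'\in A\}$. The constants are independent of $n$. *)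

From HB Require Import structures.
From mathcomp Require Import all_boot all_order all_algebra.
From mathcomp Require Import all_classical all_reals all_analysis.
Set Implicit Arguments. Unset Strict Implicit. Unset Printing Implicit Defensive.
Import Order.TTheory GRing.Theory Num.Theory.
Local Open Scope ring_scope.

Section Defs.
Variable R : realType.

Definition dot2 (x y : R * R) : R := x.1 * y.1 + x.2 * y.2.
Definition sub2 (x y : R * R) : R * R := (x.1 - y.1, x.2 - y.2).

Definition in_ball2 (x : R * R) (r : R) (y : R * R) : Prop :=
  (y.1 - x.1) ^+ 2 + (y.2 - x.2) ^+ 2 <= r ^+ 2.

Definition normX (K : nat) (b : 'I_K -> R * R) (x : R * R) : R :=
  \big[Num.max/0]_(k < K) `|dot2 x (b k)|.

(* \bigcap_k {x : |x . b_k| <= 1} is a symmetric convex polygon with exactly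
   2K sides: every constraint k is non-redundant, i.e. the lines x . b_k = +-1
   each carry a genuine edge (a point of it lies strictly inside all other
   strips). This forces the b_k to be nonzero and pairwise non-parallel, and
   for K >= 2 the intersection is bounded. *)
Definition polygon_2K_sides (K : nat) (b : 'I_K -> R * R) : Prop :=
  forall k : 'I_K, exists x : R * R,
    `|dot2 x (b k)| = 1 /\ forall j : 'I_K, j != k -> `|dot2 x (b j)| < 1.

Definition card_diff_dot (A : seq (R * R)) (v : R * R) : nat :=
  size (undup [seq dot2 (sub2 x y) v | x <- A, y <- A]).

Definition card_dist (K : nat) (b : 'I_K -> R * R) (A : seq (R * R)) : nat :=
  size (undup [seq normX b (sub2 x y) | x <- A, y <- A]).

End Defs.

From HB Require Import structures.
From mathcomp Require Import all_boot all_order all_algebra.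
From mathcomp Require Import all_classical all_reals all_analysis.
From mathcomp Require Import zify ring lra.
Import Order.TTheory GRing.Theory Num.Theory.
Local Open Scope ring_scope.
Set Implicit Arguments. Unset Strict Implicit. Unset Printing Implicit Defensive.

(* Write [D j k] for the cross product of [b j] and [b k], nonzero for [j != k]
   because no constraint is redundant, and [u^perp] for [u] turned by a right
   angle, so that [(b j)^perp . b k = D j k].  The set [A] is a generalized
   arithmetic progression [{ sg * \sum_j F j * w j * (b j)^perp | F j < m }]
   with [n = m ^ K] points.  In the direction [b k] the [k]-th generator
   disappears, so [(A - A) . b k] has at most [(2 m) ^ (K - 1)] elements, and
   [|Delta_X(A)|] at most [K] times as many since [normX x = max_k |x . b k|].
   The generators are grouped in levels [0, ..., L] of two, with weight
   [eps ^ l] on level [l] and [eps] of order [1 / m].  If [F != F'], let [j0] be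
   the first generator where they differ and [k] the other generator of its
   level: along [b k] the term of [j0] is at least [eps ^ l * dmin], the term
   of [k] vanishes and all later levels contribute at most half of it, so [A] is
   [m ^ -(L + 1)]-separated, i.e. [n ^ (-1/2)] when [K = 2 (L + 1)].  For odd
   [K] the level 0 holds three generators whose weights, of size [Q] with
   [m = Q (Q + 1)], keep their integer combinations separated along [b 0] or
   [b 1]; the factor [Q + 1] lost in the scaling is the missing half level. *)

Section Plane.
Variable R : realType.
Implicit Types u v : R * R.

Definition cross2 u v : R := u.1 * v.2 - u.2 * v.1.

Lemma cross2ii u : cross2 u u = 0.
Proof. by rewrite /cross2 mulrC subrr. Qed.

Lemma le_normX K (b : 'I_K -> R * R) v k : `|dot2 v (b k)| <= normX b v.
Proof. exact: (le_bigmax 0 (fun k => `|dot2 v (b k)|) k). Qed.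

Lemma normX_attained K (b : 'I_K.+1 -> R * R) v :
  exists k, normX b v = `|dot2 v (b k)|.
Proof.
by rewrite /normX (bigmax_eq_arg 0 ord0 predT (fun k => `|dot2 v (b k)|)) //; eexists.
Qed.

Lemma polygon_2K_sides_cross2_neq0 K (b : 'I_K -> R * R) j k :
  polygon_2K_sides b -> j != k -> cross2 (b j) (b k) != 0.
Proof.
(* Edge points [x] of [j] and [y] of [k] would give
   [1 = |x . b j| * |y . b k| = |x . b k| * |y . b j| < 1]. *)
move=> polygon_b neq_jk; apply/eqP => cross0.
have [x [xj_eq1 x_lt1]] := polygon_b j; have [y [yk_eq1 y_lt1]] := polygon_b k.
have xk_lt1 := x_lt1 k; have yj_lt1 := y_lt1 j neq_jk.
rewrite eq_sym in xk_lt1; have {}xk_lt1 := xk_lt1 neq_jk.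
have : dot2 x (b j) * dot2 y (b k) - dot2 x (b k) * dot2 y (b j) = 0.
  by rewrite -(mulr0 (x.1 * y.2 - x.2 * y.1)) -cross0 /dot2 /cross2; ring.
move/eqP; rewrite subr_eq0 => /eqP/(congr1 Num.norm); rewrite !normrM xj_eq1 yk_eq1 mulr1.
by have := normr_ge0 (dot2 x (b k)); have := normr_ge0 (dot2 y (b j)); nra.
Qed.

Lemma cross2_lower_bound K (b : 'I_K -> R * R) : polygon_2K_sides b ->
  exists2 dmin, 0 < dmin & forall j k, j != k -> dmin <= `|cross2 (b j) (b k)|.
Proof.
move=> polygon_b; pose f (p : 'I_K * 'I_K) := `|cross2 (b p.1) (b p.2)|.
exists (\big[Num.min/1]_(p | p.1 != p.2) f p).
  by apply: lt_bigmin => // p; rewrite normr_gt0; apply: polygon_2K_sides_cross2_neq0.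
by move=> j k neq_jk; exact: (bigmin_le_cond 1 f (j := (j, k)) neq_jk).
Qed.

Lemma cross2_upper_bound K (b : 'I_K -> R * R) : exists dmax,
  (forall j k, `|cross2 (b j) (b k)| <= dmax) /\
  (forall j, `|(b j).1| <= dmax /\ `|(b j).2| <= dmax).
Proof.
pose f (p : 'I_K * 'I_K) := `|cross2 (b p.1) (b p.2)| + `|(b p.1).1| + `|(b p.1).2|.
exists (\big[Num.max/0]_p f p); split=> [j k | j].
  have := le_bigmax 0 f (j, k); rewrite /f /=.
  by have := normr_ge0 (b j).1; have := normr_ge0 (b j).2; lra.
have := le_bigmax 0 f (j, j); rewrite /f /=.
by have := normr_ge0 (b j).1; have := normr_ge0 (b j).2;
  have := normr_ge0 (cross2 (b j) (b j)); lra.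
Qed.

End Plane.

Section NumericBounds.
Variable R : realFieldType.

Lemma natr_dist_ge1 (a c : nat) : a != c -> 1 <= `|a%:R - c%:R : R|.
Proof.
rewrite neq_ltn => /orP[lt_ac|lt_ca].
  by rewrite distrC -natrB 1?ltnW // normr_nat ler1n subn_gt0.
by rewrite -natrB 1?ltnW // normr_nat ler1n subn_gt0.
Qed.

Lemma natr_dist_le (m a c : nat) : (a < m)%N -> (c < m)%N -> `|a%:R - c%:R : R| <= m%:R.
Proof.
rewrite -!(ltr_nat R) => lt_am lt_cm.
by rewrite ler_norml; apply/andP; split; have := ler0n R a; have := ler0n R c; lra.
Qed.

Lemma ler_norm_natr_dist_mul (x : R) (a c : nat) :
  a != c -> `|x| <= `|(a%:R - c%:R) * x|.
Proof. by move=> neq_ac; rewrite normrM ler_peMl ?natr_dist_ge1. Qed.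

Lemma ler_norm_div (x y a c : R) : 0 < c -> `|x| <= a -> c <= `|y| -> `|x / y| <= a / c.
Proof.
move=> c_gt0 le_xa le_cy; have y_gt0 := lt_le_trans c_gt0 le_cy.
by rewrite normrM normfV ler_pM ?invr_ge0 // lef_pV2.
Qed.

Lemma ler_norm_sum_const n (P : pred 'I_n) (f : 'I_n -> R) (e : R) :
  0 <= e -> (forall j, P j -> `|f j| <= e) -> `|\sum_(j | P j) f j| <= n%:R * e.
Proof.
move=> e_ge0 le_fe; apply: le_trans (ler_norm_sum _ _ _) _.
apply: (le_trans (y := \sum_(j < n) e)); last by rewrite sumr_const card_ord mulr_natl.
by rewrite big_mkcond /=; apply: ler_sum => j _; case: ifP => // /le_fe.
Qed.

Lemma ler_head_norm_sum n (S : pred 'I_n) (f : 'I_n -> R) (a e : R) :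
  0 <= e -> a <= `|\sum_(j | S j) f j| -> (forall j, ~~ S j -> `|f j| <= e) ->
  a - n%:R * e <= `|\sum_j f j|.
Proof.
move=> e_ge0 head tail; rewrite (bigID S) /=.
have := ler_norm_sum_const e_ge0 tail.
have := lerB_normD (\sum_(j | S j) f j) (\sum_(j | ~~ S j) f j); lra.
Qed.

End NumericBounds.

Lemma powR_expnS_1subV (R : realType) (m K : nat) :
  ((m ^ K.+1)%:R : R) `^ (1 - K.+1%:R^-1) = (m ^ K)%:R.
Proof.
rewrite !natrX -powR_mulrn // -powRrM.
have -> : K.+1%:R * (1 - K.+1%:R^-1) = K%:R :> R.
  by rewrite mulrBr mulr1 mulfV ?pnatr_eq0 // -addn1 natrD addrK.
by rewrite powR_mulrn.
Qed.

Lemma powR_Nhalf_sqr (R : realType) (x : R) : 0 <= x -> (x `^ (- 2^-1)) ^+ 2 = x^-1.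
Proof.
move=> x_ge0; rewrite -powR_mulrn ?powR_ge0 // -powRrM.
have -> : - 2^-1 * 2%:R = -1 :> R by field.
by rewrite powR_inv1.
Qed.

Lemma triple_code_inj (Q x0 x1 x2 y0 y1 y2 : nat) :
  (x2 < Q * Q.+1)%N -> (y2 < Q * Q.+1)%N ->
  (Q * x0 + x2 = Q * y0 + y2)%N -> (Q.+1 * x1 + x2 = Q.+1 * y1 + y2)%N ->
  [/\ x0 = y0, x1 = y1 & x2 = y2].
Proof.
move=> lt_x2 lt_y2 eq0 eq1.
(* [Q.+1 * (x1 - y1) = Q * (x0 - y0)] forces [x1 - y1 = Q * t],
   hence [y2 - x2 = Q * Q.+1 * t]. *)
have [t def_t] : exists t : int, (x1%:Z - y1%:Z = Q%:Z * t)%R.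
  by exists ((x0%:Z - y0%:Z) - (x1%:Z - y1%:Z))%R; lia.
have QQ_ge0 : (0 <= Q%:Z * (Q%:Z + 1))%R by lia.
have t0 : t = 0%R.
  have [t_le|[//|t_ge]] : (t <= -1 \/ t = 0 \/ 1 <= t)%R by lia.
    by have := ler_wpM2l QQ_ge0 t_le; nia.
  by have := ler_wpM2l QQ_ge0 t_ge; nia.
rewrite t0 mulr0 in def_t.
have Q_gt0 : (0 < Q)%N by nia.
have [eq_x1 eq_x2] : x1 = y1 /\ x2 = y2 by lia.
by split=> //; apply/eqP; rewrite -(eqn_pmul2l Q_gt0); apply/eqP; lia.
Qed.

Section Separation.
Variables (R : realFieldType) (K' L o Q m : nat) (D : 'I_K'.+1 -> 'I_K'.+1 -> R).
Variables (dmin dmax eps : R).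
Local Notation K := K'.+1.
Hypotheses (o_le1 : (o <= 1)%N) (K_eq : K = (2 * L.+1 + o)%N).
Hypothesis m_eq : o = 1%N -> m = (Q * Q.+1)%N.
Hypotheses (Dii : forall i, D i i = 0) (dmin_gt0 : 0 < dmin).
Hypothesis dmin_le_D : forall j k, j != k -> dmin <= `|D j k|.
Hypothesis D_le_dmax : forall j k, `|D j k| <= dmax.
Hypotheses (eps_gt0 : 0 < eps) (eps_le1 : eps <= 1).
Hypothesis eps_small : K%:R * (m%:R * eps * dmax) <= dmin / 2.

Definition level (j : 'I_K) : nat := ((j - o) %/ 2)%N.

Let i0 : 'I_K := inord 0.
Let i1 : 'I_K := inord 1.
Let i2 : 'I_K := inord 2.

(* Truncated subtraction puts the generators [2 l + o] and [2 l + o + 1] on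
   level [l], and for [o = 1] also [0] on level 0.  The weights of [0] and [1]
   then make the level-0 parts of the gaps [\sum_j gap_term s s' k j] for
   [k = 1] and [k = 0] equal to [(Q * ds 0 + ds 2) * D 2 1] and
   [(Q.+1 * ds 1 + ds 2) * D 2 0], where [ds j = s j - s' j]. *)
Definition weight (j : 'I_K) : R :=
  if (o == 1%N) && (j == 0%N :> nat) then Q%:R * D i2 i1 / D i0 i1
  else if (o == 1%N) && (j == 1%N :> nat) then Q.+1%:R * D i2 i0 / D i1 i0
  else eps ^+ level j.

Definition gap_term (s s' : 'I_K -> nat) (k j : 'I_K) : R :=
  ((s j)%:R - (s' j)%:R) * weight j * D j k.

Definition dominated (s s' : 'I_K -> nat) (l : nat) : Prop :=
  exists k (S : pred 'I_K),
    eps ^+ l * dmin <= `|\sum_(j | S j) gap_term s s' k j| /\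
    forall j, ~~ S j -> `|gap_term s s' k j| <= m%:R * eps ^+ l.+1 * dmax.

Let dmax_ge0 : 0 <= dmax. Proof. exact: le_trans (D_le_dmax ord0 ord0). Qed.

Let eps_pow_ge0 e : 0 <= eps ^+ e. Proof. exact/exprn_ge0/ltW. Qed.

Let bound_ge0 e : 0 <= m%:R * eps ^+ e * dmax.
Proof. by rewrite !mulr_ge0 ?eps_pow_ge0. Qed.

Lemma level_le (j : 'I_K) : (level j <= L)%N.
Proof. by have := ltn_ord j; rewrite /level; lia. Qed.

Lemma weight_level (j : 'I_K) :
  ~~ ((o == 1%N) && (j < 2)%N) -> weight j = eps ^+ level j.
Proof.
rewrite /weight => not_low.
case: ifP => [ /andP[K_odd /eqP j0]|_]; first by move: not_low; rewrite K_odd j0.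
by case: ifP => [ /andP[K_odd /eqP j1]|//]; move: not_low; rewrite K_odd j1.
Qed.

Lemma gap_term_le s s' k (j : 'I_K) e :
  (forall j, s j < m)%N -> (forall j, s' j < m)%N ->
  ~~ ((o == 1%N) && (j < 2)%N) -> (e <= level j)%N ->
  `|gap_term s s' k j| <= m%:R * eps ^+ e * dmax.
Proof.
move=> lt_s lt_s' not_low le_e.
have le_s := natr_dist_le R (lt_s j) (lt_s' j).
have le_eps : `|eps ^+ level j| <= eps ^+ e.
  by rewrite ger0_norm ?eps_pow_ge0 // ler_wiXn2l // ltW.
rewrite /gap_term weight_level // !normrM.
exact: ler_pM (ler_pM _ _ le_s le_eps) (D_le_dmax j k).
Qed.

Lemma weight_bound (j : 'I_K) :
  `|weight j| <= (if o == 1%N then Q.+1%:R else 1) * (dmax / dmin).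
Proof.
have [v0 v1] : i0 = 0 :> nat /\ i1 = 1 :> nat by split; apply: inordK; lia.
have neq01 : i0 != i1 by rewrite -val_eqE /= v0 v1.
have dmin_le_dmax : dmin <= dmax := le_trans (dmin_le_D neq01) (D_le_dmax _ _).
have dmax_dmin_ge1 : 1 <= dmax / dmin by rewrite ler_pdivlMr // mul1r.
have le_QQ : Q%:R <= Q.+1%:R :> R by rewrite ler_nat.
rewrite /weight; case: ifP => [ /andP[/eqP -> _]|_].
  by rewrite eqxx -mulrA normrM normr_nat ler_pM // ler_norm_div ?D_le_dmax ?dmin_le_D.
case: ifP => [ /andP[/eqP -> _]|_].
  rewrite eqxx -mulrA normrM normr_nat ler_pM // ler_norm_div ?D_le_dmax //.
  by rewrite dmin_le_D // eq_sym.
have eps_pow_le1 : `|eps ^+ level j| <= 1.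
  by rewrite ger0_norm ?eps_pow_ge0 // exprn_ile1 // ltW.
apply: le_trans eps_pow_le1 _; case: ifP => _; last by rewrite mul1r.
apply: (le_trans dmax_dmin_ge1).
by rewrite ler_peMl ?ler1n // (le_trans ler01 dmax_dmin_ge1).
Qed.

Lemma dominated_gap s s' l : (l <= L)%N -> dominated s s' l ->
  exists k, eps ^+ L * dmin / 2 <= `|\sum_j gap_term s s' k j|.
Proof.
move=> le_lL [k [S [head tail]]]; exists k.
have := ler_head_norm_sum (bound_ge0 l.+1) head tail.
have tail_small : K%:R * (m%:R * eps ^+ l.+1 * dmax) <= eps ^+ l * dmin / 2.
  have -> : K%:R * (m%:R * eps ^+ l.+1 * dmax) = eps ^+ l * (K%:R * (m%:R * eps * dmax)).
    by rewrite exprSr; ring.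
  by rewrite -(mulrA (eps ^+ l)) ler_wpM2l ?eps_pow_ge0.
have : eps ^+ L * dmin <= eps ^+ l * dmin.
  by rewrite ler_wpM2r ?ler_wiXn2l // ltW.
lra.
Qed.

Lemma sum_first3 (f : 'I_K -> R) : (2 <= K')%N ->
  \sum_(j : 'I_K | (j < 3)%N) f j = f i0 + f i1 + f i2.
Proof.
move=> K'_ge2.
rewrite (eq_bigl (fun j : 'I_K => predT j && (val j < 3)%N)) //.
rewrite (big_ord_narrow_cond (n1 := 3) (P := predT)) //.
rewrite !big_ord_recl big_ord0 addr0 addrA.
by congr (f _ + f _ + f _); apply: val_inj; rewrite /= inordK //; lia.
Qed.

Lemma dominated_triple s s' : o = 1%N ->
  (forall j, s j < m)%N -> (forall j, s' j < m)%N ->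
  (exists2 j : 'I_K, (j < 3)%N & s j != s' j) -> dominated s s' 0.
Proof.
move=> K_odd lt_s lt_s' [j lt_j3 neq_j].
have K'_ge2 : (2 <= K')%N by move: K_eq; rewrite K_odd; lia.
have [v0 v1 v2] : [/\ i0 = 0 :> nat, i1 = 1 :> nat & i2 = 2 :> nat].
  by split; apply: inordK; lia.
have D_neq0 j1 k1 : j1 != k1 -> D j1 k1 != 0.
  by move=> neq; rewrite -normr_gt0 (lt_le_trans dmin_gt0 (dmin_le_D neq)).
have D01 : D i0 i1 != 0 by rewrite D_neq0 // -val_eqE /= v0 v1.
have D10 : D i1 i0 != 0 by rewrite D_neq0 // -val_eqE /= v0 v1.
have [w0 w1 w2] : [/\ weight i0 = Q%:R * D i2 i1 / D i0 i1,
    weight i1 = Q.+1%:R * D i2 i0 / D i1 i0 & weight i2 = 1].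
  by rewrite /weight /level K_odd v0 v1 v2.
have tail k (j1 : 'I_K) :
    ~~ (j1 < 3)%N -> `|gap_term s s' k j1| <= m%:R * eps ^+ 1 * dmax.
  by move=> ge_j1; apply: gap_term_le => //; rewrite /level K_odd; lia.
pose a := (Q * s i0 + s i2)%N; pose a' := (Q * s' i0 + s' i2)%N.
pose c := (Q.+1 * s i1 + s i2)%N; pose c' := (Q.+1 * s' i1 + s' i2)%N.
have : (a != a') || (c != c').
  rewrite -negb_and; apply: contra neq_j => /andP[/eqP eq_a /eqP eq_c].
  have lt_m2 := lt_s i2; have lt_m2' := lt_s' i2; rewrite m_eq // in lt_m2 lt_m2'.
  have [e0 e1 e2] := triple_code_inj lt_m2 lt_m2' eq_a eq_c.
  have : j = i0 :> nat \/ j = i1 :> nat \/ j = i2 :> nat by rewrite v0 v1 v2; lia.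
  by case=> [|[|]] /val_inj ->; apply/eqP.
case/orP=> [neq_a|neq_c].
- exists i1, (fun j1 : 'I_K => (j1 < 3)%N); split; last exact: tail.
  have -> : \sum_(j1 : 'I_K | (j1 < 3)%N) gap_term s s' i1 j1 = (a%:R - a'%:R) * D i2 i1.
    rewrite sum_first3 // /gap_term w0 w1 w2 Dii /a /a' !natrD !natrM.
    by field; rewrite D01 D10.
  rewrite expr0 mul1r (le_trans _ (ler_norm_natr_dist_mul _ neq_a)) //.
  by apply: dmin_le_D; rewrite -val_eqE /= v1 v2.
- exists i0, (fun j1 : 'I_K => (j1 < 3)%N); split; last exact: tail.
  have -> : \sum_(j1 : 'I_K | (j1 < 3)%N) gap_term s s' i0 j1 = (c%:R - c'%:R) * D i2 i0.
    rewrite sum_first3 // /gap_term w0 w1 w2 Dii /c /c' !natrD !natrM.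
    by field; rewrite D01 D10.
  rewrite expr0 mul1r (le_trans _ (ler_norm_natr_dist_mul _ neq_c)) //.
  by apply: dmin_le_D; rewrite -val_eqE /= v0 v2.
Qed.

Let partner (j : nat) : nat := if odd (j - o) then j.-1 else j.+1.

Lemma dominated_pair s s' (j0 : 'I_K) :
  (forall j, s j < m)%N -> (forall j, s' j < m)%N ->
  s j0 != s' j0 -> (forall j : 'I_K, (j < j0)%N -> s j = s' j) ->
  ~~ ((o == 1%N) && (j0 < 3)%N) -> dominated s s' (level j0).
Proof.
move=> lt_s lt_s' neq_j0 eq_below not_triple.
have j0_lt := ltn_ord j0.
have lt_partner : (partner j0 < K)%N by rewrite /partner; case: ifP; lia.
pose k := Ordinal lt_partner.
have neq_j0k : j0 != k by rewrite -val_eqE /= /partner; case: ifP; lia.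
have above (j : 'I_K) : (j0 <= j)%N -> ~~ ((o == 1%N) && (j < 2)%N) by lia.
exists k, (pred1 j0); split.
  rewrite big_pred1_eq /gap_term weight_level ?above // -mulrA.
  apply: le_trans (ler_norm_natr_dist_mul _ neq_j0).
  by rewrite normrM ger0_norm ?eps_pow_ge0 // ler_wpM2l ?eps_pow_ge0 ?dmin_le_D.
move=> j /= neq_j; case: (ltngtP j j0) => [lt_j|gt_j|/val_inj eq_j]; last first.
- by rewrite eq_j eqxx in neq_j.
- have [->|neq_jk] := eqVneq j k; first by rewrite /gap_term Dii mulr0 normr0.
  apply: gap_term_le => //; first exact/above/ltnW.
  by move: neq_jk; rewrite -val_eqE /= /level /partner; case: ifP; lia.
- by rewrite /gap_term eq_below // subrr !mul0r normr0.
Qed.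

Lemma gap_separated s s' : (forall j, s j < m)%N -> (forall j, s' j < m)%N ->
  (exists j, s j != s' j) ->
  exists k, eps ^+ L * dmin / 2 <= `|\sum_j gap_term s s' k j|.
Proof.
move=> lt_s lt_s' [j1 neq_j1].
have [j0 neq_j0 min_j0] :=
  arg_minnP (P := fun j => s j != s' j) (fun j : 'I_K => nat_of_ord j) neq_j1.
have eq_below (j : 'I_K) : (j < j0)%N -> s j = s' j.
  by move=> lt_j; apply/eqP; apply: contraTT lt_j => /min_j0; rewrite -leqNgt.
have [/andP[/eqP K_odd lt_j03]|not_triple] := boolP ((o == 1%N) && (j0 < 3)%N).
  by apply: (dominated_gap (l := 0)) => //; apply: dominated_triple => //; exists j0.
exact: dominated_gap (level_le j0) (dominated_pair lt_s lt_s' neq_j0 eq_below not_triple).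
Qed.

End Separation.

Lemma size_undup_le_card (T : finType) (U : eqType) (f : T -> U) (s : seq U) :
  {subset s <= codom f} -> (size (undup s) <= #|T|)%N.
Proof.
move=> sub_s; rewrite -(size_codom f); apply: uniq_leq_size (undup_uniq s) _.
by move=> x; rewrite mem_undup => /sub_s.
Qed.

Section Counting.
Variable R : comRingType.

Lemma diff_sum_codom (m n : nat) (k : 'I_n) (c : 'I_n -> R) (F F' : 'I_n -> 'I_m) :
  c k = 0 -> \sum_j ((F j)%:R - (F' j)%:R) * c j \in
    codom (fun H : {ffun 'I_n.-1 -> 'I_(m + m)} =>
      \sum_i ((H i)%:R - m%:R) * c (lift k i)).
Proof.
move=> ck0; apply/codomP.
have lt_shift (a a' : 'I_m) : (a + m - a' < m + m)%N.
  by case: a a' => [a ?] [a' ?] /=; lia.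
exists [ffun i => Ordinal (lt_shift (F (lift k i)) (F' (lift k i)))].
rewrite (bigD1_ord k) //= ck0 mulr0 add0r; apply: eq_bigr => i _; rewrite ffunE /=.
rewrite natrB; last by have := ltn_ord (F' (lift k i)); lia.
by rewrite natrD; ring.
Qed.

End Counting.

Section LatticePoints.
Variables (R : realType) (K : nat) (b : 'I_K -> R * R) (sg : R) (w : 'I_K -> R).

Definition lattice_point (F : 'I_K -> nat) : R * R :=
  (sg * \sum_j (F j)%:R * w j * - (b j).2, sg * \sum_j (F j)%:R * w j * (b j).1).

Lemma dot2_lattice_point F F' k :
  dot2 (sub2 (lattice_point F) (lattice_point F')) (b k) =
  sg * \sum_j ((F j)%:R - (F' j)%:R) * w j * cross2 (b j) (b k).
Proof.
rewrite /dot2 /sub2 /lattice_point /= !mulr_sumr -!sumrB !mulr_suml -big_split /=.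
by apply: eq_bigr => j _; rewrite /cross2; ring.
Qed.

End LatticePoints.

Section LatticeSet.
Variables (R : realType) (K' : nat) (b : 'I_K'.+1 -> R * R) (dmin dmax : R).
Local Notation K := K'.+1.
Hypotheses (K_ge4 : (4 <= K)%N) (dmin_gt0 : 0 < dmin).
Hypothesis dmin_le_cross : forall j k, j != k -> dmin <= `|cross2 (b j) (b k)|.
Hypothesis cross_le_dmax : forall j k, `|cross2 (b j) (b k)| <= dmax.
Hypothesis coord_le_dmax : forall j, `|(b j).1| <= dmax /\ `|(b j).2| <= dmax.

Let o := (K %% 2)%N.
Let L := (K./2).-1.
Let C1 : R := 2 * K%:R * dmax / dmin + 1.

Let o_le1 : (o <= 1)%N. Proof. by rewrite /o; lia. Qed.
Let K_eq : K = (2 * L.+1 + o)%N. Proof. by rewrite /o /L; lia. Qed.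

Let dmin_le_dmax : dmin <= dmax.
Proof.
have neq : ord0 != ord_max :> 'I_K by rewrite -val_eqE /=; lia.
exact: le_trans (dmin_le_cross neq) (cross_le_dmax _ _).
Qed.

Let dmax_gt0 : 0 < dmax. Proof. exact: lt_le_trans dmin_gt0 dmin_le_dmax. Qed.

Let C1_ge1 : 1 <= C1.
Proof. by rewrite /C1 lerDr !mulr_ge0 ?invr_ge0 // ltW. Qed.

Let C1_gt0 : 0 < C1. Proof. exact: lt_le_trans ltr01 C1_ge1. Qed.

Definition sep_const : R := dmin ^+ 2 / (12 * K%:R * dmax ^+ 2 * C1 ^+ L).

Lemma sep_const_gt0 : 0 < sep_const.
Proof.
by rewrite divr_gt0 ?exprn_gt0 // !mulr_gt0 ?exprn_gt0 // C1_gt0.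
Qed.

Variable Q : nat.
Hypothesis Q_gt0 : (0 < Q)%N.

Definition side : nat := if o == 1%N then (Q * Q.+1)%N else Q.

Lemma leq_side_expn : (Q <= side ^ K)%N.
Proof.
have le_Q_side : (Q <= side)%N by rewrite /side; case: ifP => // _; rewrite leq_pmulr.
have side_le : (side <= side ^ K)%N.
  by rewrite expnS leq_pmulr // expn_gt0 (leq_trans Q_gt0 le_Q_side).
exact: leq_trans le_Q_side side_le.
Qed.

Let T : R := if o == 1%N then Q.+1%:R else 1.
Let eps : R := (C1 * side%:R)^-1.
Let sg : R := dmin / (3 * K%:R * side%:R * T * dmax ^+ 2).
Let w := weight o Q (fun j k => cross2 (b j) (b k)) eps.
Let point (F : {ffun 'I_K -> 'I_side}) : R * R := lattice_point b sg w (fun j => F j).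

Definition lattice_set : seq (R * R) := map point (enum {ffun 'I_K -> 'I_side}).

Let side_gt0 : (0 < side)%N.
Proof. by rewrite /side; case: ifP; rewrite ?muln_gt0 Q_gt0. Qed.
Let T_gt0 : 0 < T. Proof. by rewrite /T; case: ifP. Qed.
Let eps_gt0 : 0 < eps.
Proof. by rewrite invr_gt0 mulr_gt0 ?ltr0n // C1_gt0. Qed.
Let eps_le1 : eps <= 1.
Proof. by rewrite invf_le1 ?mulr_gt0 ?ltr0n // mulr_ege1 ?ler1n. Qed.
Let sg_gt0 : 0 < sg. Proof. by rewrite divr_gt0 // !mulr_gt0 ?ltr0n ?exprn_gt0. Qed.

Let eps_small : K%:R * (side%:R * eps * dmax) <= dmin / 2.
Proof.
have -> : K%:R * (side%:R * eps * dmax) = K%:R * dmax / C1.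
  by rewrite /eps; field; rewrite pnatr_eq0 -lt0n side_gt0 gt_eqF // C1_gt0.
rewrite ler_pdivrMr ?C1_gt0 // /C1.
have -> : dmin / 2 * (2 * K%:R * dmax / dmin + 1) = K%:R * dmax + dmin / 2.
  by field; rewrite gt_eqF.
by rewrite lerDl divr_ge0 // ltW.
Qed.

Let side_eq : o = 1%N -> side = (Q * Q.+1)%N.
Proof. by move=> K_odd; rewrite /side K_odd. Qed.

Let lattice_gap (F F' : {ffun 'I_K -> 'I_side}) : F != F' ->
  exists k, sg * (eps ^+ L * dmin / 2) <= `|dot2 (sub2 (point F) (point F')) (b k)|.
Proof.
move=> neqF.
have [j neq_j] : exists j, (F j : nat) != F' j.
  apply/existsP; rewrite -negb_forall; apply: contra neqF => /forallP eqF.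
  by apply/eqP/ffunP => j; apply/val_inj/eqP/eqF.
have [k sep] := gap_separated (Q := Q) (D := fun j k => cross2 (b j) (b k))
  o_le1 K_eq side_eq (fun i => cross2ii (b i)) dmin_gt0 dmin_le_cross cross_le_dmax
  eps_gt0 eps_le1 eps_small (fun j => ltn_ord (F j)) (fun j => ltn_ord (F' j))
  (ex_intro _ j neq_j).
by exists k; rewrite dot2_lattice_point normrM gtr0_norm // ler_pM2l.
Qed.

Let gap_gt0 : 0 < sg * (eps ^+ L * dmin / 2).
Proof. by rewrite mulr_gt0 // divr_gt0 // mulr_gt0 // exprn_gt0. Qed.

Lemma lattice_set_uniq : uniq lattice_set.
Proof.
rewrite map_inj_uniq ?enum_uniq // => F F' eq_point; apply/eqP; apply: contraT => neqF.
have [k] := lattice_gap neqF; rewrite eq_point /dot2 /sub2 !subrr !mul0r addr0 normr0.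
by rewrite leNgt gap_gt0.
Qed.

Lemma size_lattice_set : size lattice_set = (side ^ K)%N.
Proof. by rewrite size_map -cardE card_ffun !card_ord. Qed.

Let point_coord_le (F : {ffun 'I_K -> 'I_side}) (c : 'I_K -> R) :
  (forall j, `|c j| <= dmax) -> `|sg * \sum_j (F j : nat)%:R * w j * c j| <= 3^-1.
Proof.
move=> c_le; rewrite normrM gtr0_norm //.
have term_le j : `|(F j : nat)%:R * w j * c j| <= side%:R * (T * (dmax / dmin)) * dmax.
  have F_le : (F j : nat)%:R <= side%:R :> R by rewrite ler_nat ltnW.
  have w_le := weight_bound o_le1 K_eq side_eq dmin_gt0 dmin_le_cross cross_le_dmax
    eps_gt0 eps_le1 eps_small j.
  by rewrite !normrM normr_nat ler_pM ?mulr_ge0 // ler_pM.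
have W_ge0 : 0 <= side%:R * (T * (dmax / dmin)) * dmax.
  by rewrite !mulr_ge0 ?invr_ge0 ?ler0n ?(ltW T_gt0) ?(ltW dmax_gt0) ?(ltW dmin_gt0).
have -> : 3^-1 = sg * (K%:R * (side%:R * (T * (dmax / dmin)) * dmax)).
  by rewrite /sg; field; rewrite !gt_eqF ?ltr0n.
by rewrite ler_pM2l // ler_norm_sum_const.
Qed.

Lemma lattice_set_in_ball x : x \in lattice_set -> in_ball2 (0, 0) (2^-1) x.
Proof.
move=> /mapP[F _ ->]; rewrite /in_ball2 /= !subr0.
have b1_le j : `|(b j).1| <= dmax by case: (coord_le_dmax j).
have b2_le j : `|- (b j).2| <= dmax by rewrite normrN; case: (coord_le_dmax j).
have := point_coord_le F b2_le; have := point_coord_le F b1_le.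
rewrite !ler_norml => /andP[? ?] /andP[? ?]; nra.
Qed.

Let dot2_point_codom (F F' : {ffun 'I_K -> 'I_side}) k :
  dot2 (sub2 (point F) (point F')) (b k) \in
    codom (fun H : {ffun 'I_K' -> 'I_(side + side)} =>
      \sum_i ((H i)%:R - side%:R) * (sg * w (lift k i) * cross2 (b (lift k i)) (b k))).
Proof.
have -> : dot2 (sub2 (point F) (point F')) (b k) =
    \sum_j ((F j : nat)%:R - (F' j : nat)%:R) * (sg * w j * cross2 (b j) (b k)).
  by rewrite dot2_lattice_point mulr_sumr; apply: eq_bigr => j _; ring.
by apply: diff_sum_codom; rewrite cross2ii mulr0.
Qed.

Lemma card_diff_dot_lattice_set k :
  (card_diff_dot lattice_set (b k))%:R <=
    (2 ^ K')%:R * ((side ^ K)%:R `^ (1 - K%:R^-1)) :> R.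
Proof.
rewrite powR_expnS_1subV -natrM ler_nat -expnMn mul2n -addnn.
have -> : ((side + side) ^ K')%N = #|{ffun 'I_K' -> 'I_(side + side)}|.
  by rewrite card_ffun !card_ord.
apply: size_undup_le_card => _ /allpairsP[[x x'] [/mapP[F _ ->] /mapP[F' _ ->] ->]].
exact: dot2_point_codom.
Qed.

Lemma card_dist_lattice_set :
  (card_dist b lattice_set)%:R <=
    (K * 2 ^ K')%:R * ((side ^ K)%:R `^ (1 - K%:R^-1)) :> R.
Proof.
rewrite powR_expnS_1subV -natrM ler_nat -mulnA -expnMn mul2n -addnn.
have -> : (K * (side + side) ^ K')%N = #|{: 'I_K * {ffun 'I_K' -> 'I_(side + side)}}|.
  by rewrite card_prod card_ffun !card_ord.
apply: (size_undup_le_card (f := fun kH : 'I_K * {ffun 'I_K' -> 'I_(side + side)} =>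
  `|\sum_i ((kH.2 i)%:R - side%:R) *
     (sg * w (lift kH.1 i) * cross2 (b (lift kH.1 i)) (b kH.1))|)).
move=> _ /allpairsP[[x x'] [/mapP[F _ ->] /mapP[F' _ ->] ->]] /=.
have [k ->] := normX_attained b (sub2 (point F) (point F')).
have /codomP[H ->] := dot2_point_codom F F' k.
by apply/codomP; exists (k, H).
Qed.

Let T_sqr_le : T ^+ 2 <= 4 * side%:R ^+ o.
Proof.
rewrite /T /side; move: o_le1; rewrite leq_eqVlt ltnS leqn0 => /orP[/eqP-> | /eqP->] /=.
  rewrite expr1 -natrX -natrM ler_nat expnS expn1 mulnA leq_mul2r /=.
  by rewrite mulSn -addn1 leq_add2l muln_gt0.
by rewrite expr1n expr0 mulr1 ler1n.
Qed.

(* Since [side ^ K = side ^ (2 * L.+1) * side ^ o], the claim amounts to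
   [T ^+ 2 <= 4 * side ^ o]. *)
Let sep_const_le_gap :
  sep_const * ((side ^ K)%:R `^ (- 2^-1)) <= sg * (eps ^+ L * dmin / 2).
Proof.
set y := _ `^ _; set M : R := side%:R ^+ L.+1.
have M_gt0 : 0 < M by rewrite exprn_gt0 // ltr0n.
have y_ge0 : 0 <= y by apply: powR_ge0.
have -> : sg * (eps ^+ L * dmin / 2) = sep_const * (2 / (T * M)).
  rewrite /sg /eps /sep_const /M exprVn exprMn [side%:R ^+ L.+1]exprS; field.
  by rewrite !gt_eqF ?exprn_gt0 ?ltr0n // C1_gt0.
rewrite ler_wpM2l ?(ltW sep_const_gt0) // ler_pdivlMr ?mulr_gt0 //.
rewrite -ler_sqr ?nnegrE ?mulr_ge0 ?(ltW T_gt0) ?(ltW M_gt0) //.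
have side_K : (side ^ K)%:R = M ^+ 2 * side%:R ^+ o :> R.
  by rewrite natrX {1}K_eq exprD mulnC exprM /M.
rewrite exprMn powR_Nhalf_sqr ?ler0n // side_K exprMn.
have -> : (M ^+ 2 * side%:R ^+ o)^-1 * (T ^+ 2 * M ^+ 2) = T ^+ 2 / side%:R ^+ o.
  by field; rewrite !gt_eqF ?exprn_gt0 ?ltr0n.
by rewrite ler_pdivrMr ?exprn_gt0 ?ltr0n //; have := T_sqr_le; lra.
Qed.

Lemma lattice_set_separated x x' : x \in lattice_set -> x' \in lattice_set -> x != x' ->
  sep_const * ((side ^ K)%:R `^ (- 2^-1)) <= normX b (sub2 x x').
Proof.
move=> /mapP[F _ ->] /mapP[F' _ ->] neq_x.
have [|k gap] := lattice_gap (F := F) (F' := F'); first by apply: contraNneq neq_x => ->.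
exact: le_trans sep_const_le_gap (le_trans gap (le_normX b _ k)).
Qed.

End LatticeSet.

Unset Implicit Arguments.

Theorem lemma1p1 (R : realType) (K : nat) (b : 'I_K -> R * R) :
  (4 <= K)%N ->
  polygon_2K_sides b ->
  exists C c C' : R, 0 < C /\ 0 < c /\ 0 < C' /\
    forall N : nat, exists n : nat, (N <= n)%N /\
      exists A : seq (R * R),
        uniq A /\ size A = n /\
        (forall x, x \in A -> in_ball2 (0, 0) (2^-1) x) /\
        (forall k : 'I_K,
           (card_diff_dot A (b k))%:R <= C * (n%:R `^ (1 - K%:R^-1))) /\
        (card_dist b A)%:R <= C' * (n%:R `^ (1 - K%:R^-1)) /\
        (forall x x', x \in A -> x' \in A -> x != x' ->
           normX b (sub2 x x') >= c * (n%:R `^ (- 2^-1))).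
Proof.
case: K b => [|K'] b // K_ge4 polygon_b.
have [dmin dmin_gt0 dmin_le_cross] := cross2_lower_bound polygon_b.
have [dmax [cross_le_dmax coord_le_dmax]] := cross2_upper_bound b.
exists (2 ^ K')%:R, (sep_const K' dmin dmax), (K'.+1 * 2 ^ K')%:R.
split; first by rewrite ltr0n expn_gt0.
split; first exact: sep_const_gt0 K_ge4 dmin_gt0 dmin_le_cross cross_le_dmax.
split; first by rewrite ltr0n muln_gt0 expn_gt0.
move=> N; exists (side K' N.+1 ^ K'.+1)%N.
split; first exact: leq_trans (leqnSn N) (leq_side_expn K' (ltn0Sn N)).
exists (lattice_set b dmin dmax N.+1).
split; first by apply: lattice_set_uniq.
split; first exact: size_lattice_set.
split; first by move=> x; apply: lattice_set_in_ball.
split; first exact: card_diff_dot_lattice_set.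
split; first exact: card_dist_lattice_set.
by move=> x x'; apply: lattice_set_separated.
Qed.
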